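(* Let $\lambda,\mu$ be partitions and $j\in\mathbb Z$. Suppose $\mu$ has an addable node $\mathfrak m$ in column $j$ but $\lambda$ has no addable node in column $j$, and let $\mu^+=\mu\cup\{\mathfrak m\}$. Then $\mathrm i_{\lambda\mu}=\mathrm i_{\lambda\mu^+}$.
   Context: Partitions are identified with Young diagrams $\{(a,b)\in\mathbb N^2:b\le\lambda_a\}$; nodes are elements of $\mathbb N^2$; $(a,b)$ has height $a+b$ and lies in column $b-a$ (smaller column = further left). Neighbours: $\mathtt{NE}(\mathfrak n)=\mathfrak n+(0,1)$, $\mathtt{SE}(\mathfrak n)=\mathfrak n-(1,0)$, $\mathtt{N}(\mathfrak n)=\mathfrak n+(1,1)$. An addable node of $\lambda$ is a node not in $\lambda$ whose addition gives a partition. A tile is a finite nonempty set of nodes orderable $\mathfrak n_1,\dots,\mathfrak n_r$ with $\mathfrak n_{i+1}\in\{\mathtt{NE}(\mathfrak n_i),\mathtt{SE}(\mathfrak n_i)\}$, with start (leftmost node) and end (rightmost node); it is a Dyck tile if its start and end both attain the maximal height of its nodes. A Dyck tiling of $\lambda\setminus\mu$ (for $\lambda\supseteq\mu$) is a partition of $\lambda\setminus\mu$ into Dyck tiles. It is cover-inclusive if whenever $\mathfrak a$ and $\mathtt N(\mathfrak a)$ both lie in $\lambda\setminus\mu$, the tile containing $\mathtt N(\mathfrak a)$ starts weakly to the left of, and ends weakly to the right of, the tile containing $\mathfrak a$. $\mathrm i_{\lambda\mu}$ is the number of cover-inclusive Dyck tilings of $\lambda\setminus\mu$ if $\lambda\supseteq\mu$,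 and $0$ otherwise. *)

From HB Require Import structures.
From mathcomp Require Import all_boot all_order all_algebra.
From mathcomp Require Import finmap.
From mathcomp Require Import boolp.
Set Implicit Arguments. Unset Strict Implicit. Unset Printing Implicit Defensive.
Import Order.TTheory GRing.Theory Num.Theory.
Local Open Scope fset_scope.

(* Nodes are elements of N^2 (diagram nodes have both coordinates >= 1). *)
Definition node := (nat * nat)%type.

Definition is_partition (s : seq nat) : bool :=
  sorted geq s && all (fun x => 0 < x) s.

(* Young diagram {(a,b) : 1 <= a, 1 <= b <= lambda_a}. *)
Definition diag (s : seq nat) : {fset node} :=
  seq_fset tt (flatten [seq [seq (i.+1, j.+1) | j <- iota 0 (nth 0 s i)]
                         | i <- iota 0 (size s)]).

Definition height (n : node) : nat := n.1 + n.2.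
Definition column (n : node) : int := (n.2%:Z - n.1%:Z)%R.

Definition NE (n : node) : node := (n.1, n.2.+1).
Definition SE (n : node) : node := (n.1.-1, n.2).
Definition N (n : node) : node := (n.1.+1, n.2.+1).

Definition addable (s : seq nat) (n : node) : Prop :=
  n \notin diag s /\
  exists nu : seq nat, is_partition nu /\ diag nu = n |` diag s.

Definition tile_step (x y : node) : bool := (y == NE x) || (y == SE x).

Definition is_tile (t : {fset node}) : Prop :=
  exists s : seq node,
    [/\ s != [::], uniq s, sorted tile_step s & t = seq_fset tt s].

Definition is_start (t : {fset node}) (n : node) : Prop :=
  n \in t /\ forall x, x \in t -> (column n <= column x)%R.
Definition is_end (t : {fset node}) (n : node) : Prop :=
  n \in t /\ forall x, x \in t -> (column x <= column n)%R.

Definition is_dyck_tile (t : {fset node}) : Prop :=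
  is_tile t /\
  forall s e, is_start t s -> is_end t e ->
    forall x, x \in t -> height x <= height s /\ height x <= height e.

Definition is_dyck_tiling (D : {fset node}) (P : {fset {fset node}}) : Prop :=
  [/\ (forall t, t \in P -> is_dyck_tile t /\ t `<=` D),
      (forall t1 t2, t1 \in P -> t2 \in P -> t1 != t2 -> [disjoint t1 & t2])
    & (forall x, x \in D -> exists2 t, t \in P & x \in t)].

Definition cover_inclusive (D : {fset node}) (P : {fset {fset node}}) : Prop :=
  forall a t t', a \in D -> N a \in D -> t \in P -> t' \in P ->
    a \in t -> N a \in t' ->
    (forall s s', is_start t s -> is_start t' s' -> (column s' <= column s)%R) /\
    (forall e e', is_end t e -> is_end t' e' -> (column e <= column e')%R).

Definition is_ci_dyck_tiling (D : {fset node}) (P : {fset {fset node}}) : Prop :=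
  is_dyck_tiling D P /\ cover_inclusive D P.

(* Every tiling of D is a set of subsets
   of D, so they are all counted inside fpowerset (fpowerset D). *)
Definition skew (lam mu : seq nat) : {fset node} := diag lam `\` diag mu.

Definition i_num (lam mu : seq nat) : nat :=
  if diag mu `<=` diag lam then
    #|` [fset P in fpowerset (fpowerset (skew lam mu))
           | `[< is_ci_dyck_tiling (skew lam mu) P >]] |
  else 0.

From Pilot Require Import Defs.
From mathcomp Require Import all_boot all_order all_algebra.
From mathcomp Require Import finmap.
From mathcomp Require Import boolp.
From mathcomp Require Import zify.
Set Implicit Arguments. Unset Strict Implicit. Unset Printing Implicit Defensive.
Import Order.TTheory GRing.Theory Num.Theory.
Local Open Scope fset_scope.

(* Since lam has no addable node in column j, the node m lies in lam, so lam \ mu^+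
   is lam \ mu with m removed.  Both lower neighbours of m lie outside lam \ mu,
   so a Dyck tile through m that is not {m} has m as a valley and contains both
   upper neighbours NW m and NE m.  Then N m is in lam (otherwise it would be
   addable in column j), and cover-inclusiveness forces the tile of N m to stick
   out on both sides of column j while its lower neighbours belong to the tile
   of m: N m is again a valley.  Iterating climbs the diagonal of column j
   forever, which the finite diagram lam forbids.  Hence {m} is a tile of every
   cover-inclusive Dyck tiling of lam \ mu, and removing it is a bijection onto
   the cover-inclusive Dyck tilings of lam \ mu^+. *)

Definition SW (n : node) : node := (n.1, n.2.-1).
Definition NW (n : node) : node := (n.1.+1, n.2).

Lemma column_N (x : node) : column (N x) = column x.
Proof. by rewrite /column /N /=; lia. Qed.

Lemma column_NE (x : node) : column (NE x) = (column x + 1)%R.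
Proof. by rewrite /column /NE /=; lia. Qed.

Lemma column_NW (x : node) : column (NW x) = (column x - 1)%R.
Proof. by rewrite /column /NW /=; lia. Qed.

Lemma N_neq (x : node) : N x != x.
Proof. by case: x => x1 x2; rewrite /N xpair_eqE /= eqn_leq ltnn. Qed.

Lemma SW_neq (x : node) : 0 < x.2 -> SW x != x.
Proof. by case: x => x1 x2 /= h; rewrite /SW xpair_eqE /=; lia. Qed.

Lemma SE_neq (x : node) : 0 < x.1 -> SE x != x.
Proof. by case: x => x1 x2 /= h; rewrite /SE xpair_eqE /=; lia. Qed.

Lemma mem_diag (s : seq nat) (x : node) :
  (x \in diag s) = [&& 0 < x.1, 0 < x.2 & x.2 <= nth 0 s x.1.-1].
Proof.
rewrite /diag seq_fsetE; apply/flatten_mapP/idP.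
  case=> i; rewrite mem_iota add0n => /andP[_ Hi] /mapP[k].
  by rewrite mem_iota add0n => /andP[_ Hk] ->.
case: x => [[|a] [|b]] //= H.
exists a; last by apply/mapP; exists b => //; rewrite mem_iota.
rewrite mem_iota add0n /=; apply: contraTT H; rewrite -!leqNgt.
by move/(nth_default 0) ->.
Qed.

Lemma diag_row_bound (s : seq nat) (x : node) : x \in diag s -> x.1 <= size s.
Proof.
rewrite mem_diag => /and3P[x1 x2]; case: (leqP x.1 (size s)) => // hx.
by rewrite nth_default; lia.
Qed.

Lemma partitionP (s : seq nat) : is_partition s <->
  (forall k, nth 0 s k.+1 <= nth 0 s k) /\ (forall k, k < size s -> 0 < nth 0 s k).
Proof.
rewrite /is_partition; split.
  case/andP=> /(sortedP 0) Hs /allP Hp; split; last by move=> k hk; apply/Hp/mem_nth.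
  move=> k; case: (ltnP k.+1 (size s)) => h; first exact: Hs.
  by rewrite nth_default.
case=> H1 H2; apply/andP; split; first by apply/(sortedP 0) => i _; apply: H1.
by apply/(all_nthP 0) => i hi; apply: H2.
Qed.

Lemma partition_nth_mono (s : seq nat) k k' :
  is_partition s -> k <= k' -> nth 0 s k' <= nth 0 s k.
Proof.
move=> /partitionP [H _]; elim: k' => [|k' IH]; first by rewrite leqn0 => /eqP ->.
rewrite leq_eqVlt => /orP[/eqP -> //|]; rewrite ltnS => /IH h.
exact: leq_trans (H _) h.
Qed.

Lemma diag_down (s : seq nat) (x y : node) : is_partition s -> x \in diag s ->
  0 < y.1 -> 0 < y.2 -> y.1 <= x.1 -> y.2 <= x.2 -> y \in diag s.
Proof.
move=> Hs; rewrite !mem_diag => /and3P[h1 h2 h3] g1 g2 l1 l2.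
rewrite g1 g2 /=; apply: leq_trans l2 (leq_trans h3 _).
apply: partition_nth_mono => //; lia.
Qed.

Lemma addable_diag_down (s : seq nat) (x y : node) : addable s x ->
  0 < y.1 -> 0 < y.2 -> y.1 <= x.1 -> y.2 <= x.2 -> y != x -> y \in diag s.
Proof.
case=> _ [nu [Hnu Hdnu]] g1 g2 l1 l2 yx.
have : y \in diag nu by apply: (diag_down Hnu _ g1 g2 l1 l2); rewrite Hdnu fset1U1.
by rewrite Hdnu in_fset1U (negbTE yx).
Qed.

Lemma addable_pos (s : seq nat) (x : node) : addable s x -> 0 < x.1 /\ 0 < x.2.
Proof.
case=> _ [nu [_ Hdnu]]; have : x \in diag nu by rewrite Hdnu fset1U1.
by rewrite mem_diag => /and3P[].
Qed.

Lemma diag_set_nth (s : seq nat) (i c : nat) : 0 < i -> 0 < c -> nth 0 s i.-1 = c.-1 ->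
  diag (set_nth 0 s i.-1 c) = (i, c) |` diag s.
Proof.
move=> hi hc heq; apply/fsetP => -[x1 x2].
rewrite in_fset1U !mem_diag /= nth_set_nth /= xpair_eqE.
case: (x1 =P i) => [->|e1]; last first.
  by case: (x1.-1 =P i.-1) => e3 //=; have -> : x1 = 0 by lia.
rewrite eqxx hi /=; case: (x2 =P c) => [->|e2] /=; first by rewrite hc leqnn.
by apply/idP/idP => /andP[a b]; apply/andP; split => //; lia.
Qed.

Lemma partition_set_nth (s : seq nat) (i c : nat) : is_partition s -> 0 < i -> 0 < c ->
  nth 0 s i.-1 = c.-1 -> (i = 1 \/ c <= nth 0 s i.-2) -> is_partition (set_nth 0 s i.-1 c).
Proof.
move=> /partitionP [Hm Hp] hi hc heq hup; apply/partitionP; split.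
  move=> k; rewrite !nth_set_nth /=; have := Hm k.
  case: eqP => e1; case: eqP => e2; try lia.
    by case: hup => h; [lia | have -> : k = i.-2 by lia].
  by rewrite e2 => _; have := Hm i.-1; rewrite (prednK hi); lia.
move=> k; rewrite size_set_nth nth_set_nth /=.
case: eqP => e1 hk; first lia.
case: (ltnP k (size s)) => hks; first exact: Hp.
by case: hup => h; [lia | move: h; rewrite nth_default; lia].
Qed.

Lemma addable_corner (s : seq nat) (i c : nat) : is_partition s -> 0 < i -> 0 < c ->
  (i, c) \notin diag s -> (i = 1 \/ SE (i, c) \in diag s) ->
  (c = 1 \/ SW (i, c) \in diag s) -> addable s (i, c).
Proof.
move=> Hs hi hc hn hSE hSW; split => //.
have hlt : nth 0 s i.-1 < c by move: hn; rewrite mem_diag /= hi hc /= -ltnNge.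
have heq : nth 0 s i.-1 = c.-1.
  by case: hSW => [e|]; [lia | rewrite mem_diag /=; lia].
have hup : i = 1 \/ c <= nth 0 s i.-2.
  by case: hSE => [e|]; [left | rewrite mem_diag /= => h; right; lia].
exists (set_nth 0 s i.-1 c); split; first exact: partition_set_nth.
exact: diag_set_nth.
Qed.

Lemma column_step (x y : node) : tile_step x y -> x != y -> column y = (column x + 1)%R.
Proof.
case: x y => [x1 x2] [y1 y2]; rewrite /tile_step /NE /SE /column /=.
case/orP=> /eqP [-> ->] hne; first lia.
by case: x1 hne => [|x1] hne /=; [rewrite eqxx in hne | lia].
Qed.

Lemma column_path (s : seq node) x0 : uniq s -> sorted tile_step s ->
  forall i, i < size s -> column (nth x0 s i) = (column (nth x0 s 0) + i%:Z)%R.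
Proof.
move=> Hu /(sortedP x0) Hs; elim=> [|i IH] hi; first by rewrite addr0.
have hne : nth x0 s i != nth x0 s i.+1 by rewrite (nth_uniq x0 (ltnW hi) hi Hu); lia.
by rewrite (column_step (Hs i hi) hne) IH; [lia | exact: ltnW].
Qed.

Lemma tile_enum (T : {fset node}) : is_tile T -> exists (s : seq node) (c : int),
  [/\ 0 < size s, T =i s, sorted tile_step s &
      forall i, i < size s -> column (nth (0, 0) s i) = (c + i%:Z)%R].
Proof.
case=> s [hne hu hs ET]; exists s, (column (nth (0, 0) s 0)).
split => //; last exact: column_path.
- by rewrite lt0n size_eq0.
- by move=> x; rewrite ET seq_fsetE.
Qed.

Lemma tile_column_inj (T : {fset node}) (x y : node) : is_tile T -> x \in T -> y \in T ->
  column x = column y -> x = y.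
Proof.
case/tile_enum=> s [c [_ hT _ hcol]]; rewrite !hT => hx hy.
rewrite -(nth_index (0, 0) hx) -(nth_index (0, 0) hy).
by rewrite !hcol ?index_mem // => /addrI [->].
Qed.

Lemma tile_start (T : {fset node}) : is_tile T -> exists s, is_start T s.
Proof.
case/tile_enum=> s [c [hs hT _ hcol]]; exists (nth (0, 0) s 0).
split=> [|x]; first by rewrite hT mem_nth.
rewrite hT => hx; rewrite -(nth_index (0, 0) hx) !hcol ?index_mem //; lia.
Qed.

Lemma tile_end (T : {fset node}) : is_tile T -> exists e, is_end T e.
Proof.
case/tile_enum=> s [c [hs hT _ hcol]]; exists (nth (0, 0) s (size s).-1).
split=> [|x]; first by rewrite hT mem_nth // prednK.
rewrite hT => hx; rewrite -(nth_index (0, 0) hx) !hcol ?index_mem ?prednK //.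
by rewrite lerD2l lez_nat -ltnS prednK // index_mem.
Qed.

Lemma tile_right (T : {fset node}) (x y : node) : is_tile T -> x \in T -> y \in T ->
  (column x < column y)%R -> NE x \in T \/ SE x \in T.
Proof.
case/tile_enum=> s [c [hs hT /(sortedP (0, 0)) hstep hcol]]; rewrite !hT => hx hy.
rewrite -(nth_index (0, 0) hx) -(nth_index (0, 0) hy) !hcol ?index_mem // => hlt.
rewrite ltrD2l ltz_nat in hlt.
have hi : (index x s).+1 < size s by apply: leq_ltn_trans hlt _; rewrite index_mem.
have := hstep _ hi; rewrite nth_index // /tile_step.
by case/orP=> /eqP <-; [left | right]; rewrite mem_nth.
Qed.

Lemma tile_step_pred (z x : node) : tile_step z x -> column x = (column z + 1)%R ->
  z = SW x \/ z = NW x.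
Proof.
case: z x => [z1 z2] [x1 x2]; rewrite /tile_step /NE /SE /SW /NW /column /=.
case/orP=> /eqP [-> ->] hc; [left | right] => //.
by congr pair; lia.
Qed.

Lemma tile_left (T : {fset node}) (x y : node) : is_tile T -> x \in T -> y \in T ->
  (column y < column x)%R -> SW x \in T \/ NW x \in T.
Proof.
case/tile_enum=> s [c [hs hT /(sortedP (0, 0)) hstep hcol]]; rewrite !hT => hx hy.
rewrite -(nth_index (0, 0) hx) -(nth_index (0, 0) hy) !hcol ?index_mem //.
rewrite ltrD2l ltz_nat; case Hi: (index x s) => [|i] // _.
have hi : i.+1 < size s by rewrite -Hi index_mem.
have hz : nth (0, 0) s i \in s by rewrite mem_nth // ltnW.
have hc : column (nth (0, 0) s i.+1) = (column (nth (0, 0) s i) + 1)%R.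
  by rewrite !hcol ?(ltnW hi) //; lia.
by case: (tile_step_pred (hstep _ hi) hc) => <-; [left | right].
Qed.

Lemma tile_valley (T : {fset node}) (x y1 y2 : node) : is_tile T ->
  x \in T -> y1 \in T -> y2 \in T -> (column y1 < column x)%R -> (column x < column y2)%R ->
  SW x \notin T -> SE x \notin T -> NW x \in T /\ NE x \in T.
Proof.
move=> hT hx hy1 hy2 c1 c2 hSW hSE; split.
  by case: (tile_left hT hx hy1 c1) => // h; rewrite h in hSW.
by case: (tile_right hT hx hy2 c2) => // h; rewrite h in hSE.
Qed.

Lemma start_or_left (T : {fset node}) (x : node) : x \in T ->
  is_start T x \/ exists2 y, y \in T & (column y < column x)%R.
Proof.
move=> hx; case: (EM (exists2 y, y \in T & (column y < column x)%R)) => [|H]; first by right.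
left; split=> // y hy; rewrite leNgt; apply/negP => lt; apply: H; by exists y.
Qed.

Lemma end_or_right (T : {fset node}) (x : node) : x \in T ->
  is_end T x \/ exists2 y, y \in T & (column x < column y)%R.
Proof.
move=> hx; case: (EM (exists2 y, y \in T & (column x < column y)%R)) => [|H]; first by right.
left; split=> // y hy; rewrite leNgt; apply/negP => lt; apply: H; by exists y.
Qed.

Lemma dyck_start_NE (T : {fset node}) (s : node) : is_dyck_tile T -> is_start T s ->
  NE s \notin T.
Proof.
case=> hT hdyck hs; have [e he] := tile_end hT; apply/negP => /(hdyck s e hs he) [].
by rewrite /height /NE /= addnS ltnn.
Qed.

Lemma dyck_end_NW (T : {fset node}) (e : node) : is_dyck_tile T -> is_end T e ->
  NW e \notin T.
Proof.
case=> hT hdyck he; have [s hs] := tile_start hT; apply/negP => /(hdyck s e hs he) [_].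
by rewrite /height /NW /= addSn ltnn.
Qed.

Lemma dyck_tile_valley (T : {fset node}) (x : node) : is_dyck_tile T -> x \in T ->
  SW x \notin T -> SE x \notin T -> T != [fset x] -> NW x \in T /\ NE x \in T.
Proof.
move=> hD hx hSW hSE hne; have hT := hD.1.
have [xs|[y1 hy1 c1]] := start_or_left hx; have [xe|[y2 hy2 c2]] := end_or_right hx.
- case/eqP: hne; apply/fsetP => y; rewrite in_fset1.
  apply/idP/eqP => [hy|->//]; apply: (tile_column_inj hT hy hx).
  by apply/eqP; rewrite eq_le xs.2 // xe.2.
- case: (tile_right hT hx hy2 c2) => h; last by rewrite h in hSE.
  by have := dyck_start_NE hD xs; rewrite h.
- case: (tile_left hT hx hy1 c1) => h; first by rewrite h in hSW.
  by have := dyck_end_NW hD xe; rewrite h.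
- exact: tile_valley hy1 hy2 c1 c2 hSW hSE.
Qed.

Lemma mem_skew (lam mu : seq nat) (x : node) :
  (x \in Defs.skew lam mu) = (x \in diag lam) && (x \notin diag mu).
Proof. by rewrite /Defs.skew in_fsetD andbC. Qed.

Section DyckTiling.
Variables (D : {fset node}) (P : {fset {fset node}}).
Hypothesis HP : is_dyck_tiling D P.

Lemma tiling_dyck_tile t : t \in P -> is_dyck_tile t.
Proof. by case: HP => H _ _ /H []. Qed.

Lemma tiling_sub t x : t \in P -> x \in t -> x \in D.
Proof. by case: HP => H _ _ /H [_ /fsubsetP]; apply. Qed.

Lemma tiling_cover x : x \in D -> exists2 t, t \in P & x \in t.
Proof. by case: HP => _ _; apply. Qed.

Lemma tiling_disjoint t t' x : t \in P -> t' \in P -> t != t' -> x \in t -> x \notin t'.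
Proof. by case: HP => _ H _ ht ht' htt'; move/fdisjointP: (H _ _ ht ht' htt'); apply. Qed.
End DyckTiling.

Section DiagonalPropagation.
Variables (lam mu : seq nat) (P : {fset {fset node}}) (j : int).
Hypotheses (Hlam : is_partition lam) (Hmu : is_partition mu)
  (HP : is_ci_dyck_tiling (Defs.skew lam mu) P)
  (noadd : ~ exists n, addable lam n /\ column n = j).
Local Notation D := (Defs.skew lam mu).

Lemma valley_propagates (x : node) (t : {fset node}) : column x = j -> x \in D ->
  t \in P -> [/\ x \in t, NW x \in t & NE x \in t] ->
  N x \in D /\ exists2 t', t' \in P & [/\ N x \in t', NW (N x) \in t' & NE (N x) \in t'].
Proof.
case: HP => HT Hci hcol hxD ht [hxt hNWt hNEt].
have inlam (z : node) : z \in t -> z \in diag lam.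
  by move=> /(tiling_sub HT ht); rewrite mem_skew => /andP[].
have := hxD; rewrite mem_skew => /andP[hxlam hxmu].
have hNlam : N x \in diag lam.
  apply: contrapT => hN; apply: noadd; exists (N x); split; last by rewrite column_N.
  apply: addable_corner => //; [exact/negP | right | right].
  - exact: inlam hNEt.
  - exact: inlam hNWt.
have hND : N x \in D.
  rewrite mem_skew hNlam; apply: contra hxmu => hN.
  by move: hxlam; rewrite mem_diag => /and3P[x1 x2 _]; apply: (diag_down Hmu hN).
split=> //; have [t' ht' hNt'] := tiling_cover HT hND.
have hT := (tiling_dyck_tile HT ht).1; have hT' := (tiling_dyck_tile HT ht').1.
have htt' : t != t'.
  apply: contraTneq hNt' => <-; apply/negP => hNt; move/eqP: (N_neq x); apply.
  by apply: (tile_column_inj hT hNt hxt); rewrite column_N.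
have [[st hst] [e he]] := (tile_start hT, tile_end hT).
have [[st' hst'] [e' he']] := (tile_start hT', tile_end hT').
have [ci_start ci_end] := Hci x t t' hxD hND ht ht' hxt hNt'.
have lt_st' : (column st' < column (N x))%R.
  apply: le_lt_trans (ci_start _ _ hst hst') _; apply: le_lt_trans (hst.2 _ hNWt) _.
  by rewrite column_NW column_N gtrBl.
have gt_e' : (column (N x) < column e')%R.
  apply: lt_le_trans (ci_end _ _ he he'); apply: lt_le_trans (he.2 _ hNEt).
  by rewrite column_NE column_N ltrDl.
have hSW : SW (N x) \notin t' := tiling_disjoint HT ht ht' htt' hNWt.
have hSE : SE (N x) \notin t' := tiling_disjoint HT ht ht' htt' hNEt.
have [hNW' hNE'] := tile_valley hT' hNt' hst'.1 he'.1 lt_st' gt_e' hSW hSE.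
by exists t'.
Qed.

Lemma ci_tiling_singleton (m : node) : column m = j -> m \in D ->
  SW m \notin D -> SE m \notin D -> [fset m] \in P.
Proof.
case: HP => HT _ hcol hmD hSW hSE; have [t ht hmt] := tiling_cover HT hmD.
suff -> : [fset m] = t by [].
apply/eqP; rewrite eq_sym; apply: contraT => hne.
have hSWt : SW m \notin t by apply: contra hSW; apply: (tiling_sub HT ht).
have hSEt : SE m \notin t by apply: contra hSE; apply: (tiling_sub HT ht).
have [hNW hNE] := dyck_tile_valley (tiling_dyck_tile HT ht) hmt hSWt hSEt hne.
have hiter k : iter k N m \in D /\
    exists2 t', t' \in P & [/\ iter k N m \in t', NW (iter k N m) \in t' & NE (iter k N m) \in t'].
  elim: k => [|k [hkD [t' ht' hk]]]; first by split=> //; exists t.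
  apply: (valley_propagates _ hkD ht' hk).
  by elim: (k) => //= i <-; rewrite column_N.
have hrow k : (iter k N m).1 = (m.1 + k)%N by elim: k => [|k /= ->]; rewrite ?addn0 ?addnS.
have := (hiter (size lam)).1; rewrite mem_skew => /andP[/diag_row_bound].
have := hmD; rewrite mem_skew mem_diag => /andP[/and3P[m1 _ _] _].
by rewrite hrow -[X in _ <= X]add0n leq_add2r leqNgt m1.
Qed.
End DiagonalPropagation.

Definition ci_tilings (D : {fset node}) : {fset {fset {fset node}}} :=
  [fset P in fpowerset (fpowerset D) | `[< is_ci_dyck_tiling D P >]].

Lemma mem_ci_tilings (D : {fset node}) (P : {fset {fset node}}) :
  P \in ci_tilings D <-> is_ci_dyck_tiling D P.
Proof.
rewrite !inE /=; split; first by case/andP => _ /asboolP.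
move=> HP; apply/andP; split; last exact/asboolP.
rewrite fpowersetE; apply/fsubsetP => t ht; rewrite fpowersetE.
by case: HP => -[H _ _] _; case: (H t ht).
Qed.

Lemma singleton_dyck_tile (m : node) : is_dyck_tile [fset m].
Proof.
split; first by exists [:: m]; split => //; apply/fsetP => x; rewrite seq_fsetE in_fset1 mem_seq1.
move=> s e [hs _] [he _] x; rewrite !in_fset1 in hs he * => /eqP ->.
by rewrite (eqP hs) (eqP he).
Qed.

Section RemoveSingletonTile.
Variables (D : {fset node}) (m : node).
Hypotheses (hmD : m \in D)
  (hsingle : forall P, is_ci_dyck_tiling D P -> [fset m] \in P)
  (hN : forall a, a \in D -> N a != m).

Lemma singleton_notin_tiling (Q : {fset {fset node}}) :
  is_ci_dyck_tiling (D `\ m) Q -> [fset m] \notin Q.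
Proof.
case=> -[H _ _] _; apply/negP => /H [_ /fsubsetP /(_ m)].
by rewrite in_fset1 eqxx in_fsetD1 eqxx => /(_ isT).
Qed.

Lemma ci_tiling_fsetD1 (P : {fset {fset node}}) :
  is_ci_dyck_tiling D P -> is_ci_dyck_tiling (D `\ m) (P `\ [fset m]).
Proof.
move=> HP; have [[H1 H2 H3] H4] := HP; have hmP := hsingle HP.
have notm t x : t \in P -> x \in t -> t != [fset m] -> x != m.
  move=> ht hx htm; apply: contraTneq hx => ->.
  by apply: (tiling_disjoint HP.1 hmP ht); rewrite 1?eq_sym ?fset11.
split; first split.
- move=> t; rewrite in_fsetD1 => /andP[htm ht]; have [hd /fsubsetP hs] := H1 t ht.
  by split => //; apply/fsubsetP => x hx; rewrite in_fsetD1 (notm t x) ?hs.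
- by move=> t1 t2; rewrite !in_fsetD1 => /andP[_ h1] /andP[_ h2]; apply: H2.
- move=> x; rewrite in_fsetD1 => /andP[hxm hx]; have [t ht hxt] := H3 x hx.
  exists t => //; rewrite in_fsetD1 ht andbT; apply: contraNneq hxm => etm.
  by move: hxt; rewrite etm in_fset1.
- move=> x t t'; rewrite !in_fsetD1 => /andP[_ hx] /andP[_ hNx] /andP[_ ht] /andP[_ ht'].
  exact: H4.
Qed.

Lemma ci_tiling_fsetU1 (Q : {fset {fset node}}) :
  is_ci_dyck_tiling (D `\ m) Q -> is_ci_dyck_tiling D ([fset m] |` Q).
Proof.
move=> HQ; have [[H1 H2 H3] H4] := HQ.
have subD t : t \in Q -> t `<=` D.
  move=> /H1 [_ /fsubsetP hs]; apply/fsubsetP => x /hs.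
  by rewrite in_fsetD1 => /andP[].
have notm t : t \in Q -> m \notin t.
  by move=> /H1 [_ /fsubsetP hs]; apply/negP => /hs; rewrite in_fsetD1 eqxx.
split; first split.
- move=> t; rewrite in_fset1U => /orP[/eqP ->|ht].
    by split; [exact: singleton_dyck_tile | rewrite fsub1set].
  by split; [exact: (H1 t ht).1 | exact: subD].
- move=> t1 t2; rewrite !in_fset1U => /orP[/eqP ->|h1] /orP[/eqP ->|h2] hne.
  + by rewrite eqxx in hne.
  + by apply/fdisjointP => x; rewrite in_fset1 => /eqP ->; apply: notm.
  + apply/fdisjointP => x hx; rewrite in_fset1; apply: contraTneq hx => ->.
    exact: notm.
  + exact: H2.
- move=> x hx; case: (x =P m) => [->|/eqP hxm].
    by exists [fset m]; rewrite ?fset1U1 ?fset11.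
  have [t ht hxt] : exists2 t, t \in Q & x \in t by apply: H3; rewrite in_fsetD1 hxm.
  by exists t => //; rewrite in_fset1U ht orbT.
- move=> x t t' hx hNx; rewrite !in_fset1U.
  case/orP=> [/eqP ->|ht] /orP[/eqP ->|ht'] hxt hNxt.
  + by move: hNxt; rewrite in_fset1 (negbTE (hN hx)).
  + move: hxt; rewrite in_fset1 => /eqP exm; move: hNxt; rewrite exm => hNmt.
    split=> s s' [hs _] [_ Hs']; rewrite in_fset1 in hs; rewrite (eqP hs);
      by have := Hs' _ hNmt; rewrite column_N.
  + by move: hNxt; rewrite in_fset1 (negbTE (hN hx)).
  + apply: (H4 x t t') => //; rewrite in_fsetD1 ?hx ?hNx ?andbT.
    * by apply: contraTneq hxt => ->; apply: notm.
    * exact: hN.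
Qed.

Lemma card_ci_tilings_fsetD1 : #|` ci_tilings D| = #|` ci_tilings (D `\ m)|.
Proof.
have -> : ci_tilings (D `\ m) = (fun P => P `\ [fset m]) @` ci_tilings D.
  apply/fsetP => Q; apply/idP/imfsetP.
    move/mem_ci_tilings => HQ; exists ([fset m] |` Q).
      exact/mem_ci_tilings/ci_tiling_fsetU1.
    by rewrite fsetU1K // singleton_notin_tiling.
  by case=> P /mem_ci_tilings HP ->; apply/mem_ci_tilings/ci_tiling_fsetD1.
apply/esym/eqP/card_in_imfsetP => P1 P2 /mem_ci_tilings h1 /mem_ci_tilings h2 e.
by rewrite -(fsetD1K (hsingle h1)) -(fsetD1K (hsingle h2)) /= e.
Qed.
End RemoveSingletonTile.

Lemma notin_skew_below_addable (lam mu : seq nat) (x y : node) : addable mu x ->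
  y.1 <= x.1 -> y.2 <= x.2 -> y != x -> y \notin Defs.skew lam mu.
Proof.
move=> hx l1 l2 yx; rewrite mem_skew negb_and negbK.
case: (posnP y.1) => [y1|g1]; first by rewrite mem_diag y1.
case: (posnP y.2) => [y2|g2]; first by rewrite mem_diag y2 andbF.
by rewrite (addable_diag_down hx g1 g2 l1 l2 yx) orbT.
Qed.

Lemma mem_diag_addable (lam mu : seq nat) (m : node) : is_partition lam -> addable mu m ->
  diag mu `<=` diag lam -> ~ (exists n, addable lam n /\ column n = column m) ->
  m \in diag lam.
Proof.
case: m => i c Hlam hm /fsubsetP sub noadd; apply: contrapT => hml; apply: noadd.
have [/= i0 c0] := addable_pos hm.
exists (i, c); split => //; apply: addable_corner => //; first exact/negP.
- case: (ltnP 1 i) => hi; last by left; lia.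
  by right; apply/sub/(addable_diag_down hm); rewrite /SE /= ?xpair_eqE; lia.
- case: (ltnP 1 c) => hc; last by left; lia.
  by right; apply/sub/(addable_diag_down hm); rewrite /SW /= ?xpair_eqE; lia.
Qed.

Theorem proposition3p3 (lam mu : seq nat) (j : int) (m : node) (muplus : seq nat) :
  is_partition lam -> is_partition mu ->
  addable mu m -> column m = j ->
  ~ (exists n, addable lam n /\ column n = j) ->
  is_partition muplus -> diag muplus = m |` diag mu ->
  i_num lam mu = i_num lam muplus.
Proof.
move=> Hlam Hmu Hm hcol noadd _ Hdmp.
rewrite /i_num Hdmp fsubUset fsub1set.
have [sub|] := boolP (diag mu `<=` diag lam); last by rewrite andbF.
rewrite -hcol in noadd; have mlam := mem_diag_addable Hlam Hm sub noadd.
have mD : m \in Defs.skew lam mu by rewrite mem_skew mlam Hm.1.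
rewrite mlam.
have -> : Defs.skew lam muplus = Defs.skew lam mu `\ m.
  by rewrite /Defs.skew Hdmp fsetDDl fsetUC.
have [m1 m2] := addable_pos Hm.
apply: (card_ci_tilings_fsetD1 mD).
- move=> P HP; apply: (ci_tiling_singleton Hlam Hmu HP noadd erefl mD).
  + exact: (@notin_skew_below_addable _ _ _ (SW m) Hm (leqnn _) (leq_pred _) (SW_neq m2)).
  + exact: (@notin_skew_below_addable _ _ _ (SE m) Hm (leq_pred _) (leqnn _) (SE_neq m1)).
- move=> a ha; apply: contraTneq ha => eam.
  by apply: (notin_skew_below_addable _ Hm); rewrite -eam ?leqnSn // eq_sym N_neq.
Qed.
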